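(* In the social learning model, suppose $G_-$ and $G_+$ are continuous and the left tail of $G_-$ is convex and differentiable. Then for every $L\in\mathbb{R}$ there exists $m_L>0$ such that for every $t\ge1$ and every $x\ge L$ with $\mathbb{P}_+(\ell_t=x)>0$, $$\mathbb{P}_+(E_t\mid \ell_t=x)\ge m_L.$$
   Context: Social learning model. A state $\theta\in\{-1,+1\}$ is drawn with $\mathbb{P}(\theta=+1)=\mathbb{P}(\theta=-1)=1/2$. Agents $t=1,2,\dots$ receive private signals $s_t\in\mathbb{R}$ that are i.i.d. conditionally on $\theta$, with CDF $F_+$ if $\theta=+1$ and $F_-$ if $\theta=-1$; $F_+$ and $F_-$ are mutually absolutely continuous. Let $L_t=\log\frac{\mathbb{P}(\theta=+1\mid s_t)}{\mathbb{P}(\theta=-1\mid s_t)}$ be the private log-likelihood ratio, and let $G_+$, $G_-$ denote the CDFs of $L_t$ conditional on $\theta=+1$, $\theta=-1$ respectively. Signals are assumed unbounded: for every $M\in\mathbb{R}$, $\mathbb{P}(L_t>M)>0$ and $\mathbb{P}(L_t<-M)>0$. Agent $t$ observes $a_1,\dots,a_{t-1}$ and her own signal and chooses $a_t\in\{-1,+1\}$ (utility $1$ if $a_t=\theta$, else $0$). The public belief is $\mu_t=\mathbb{P}(\theta=+1\mid a_1,\dots,a_{t-1})$ and $\ell_t=\log\frac{\mu_t}{1-\mu_t}$ (so $\ell_1=0$). In equilibrium $a_t=+1$ iff $\ell_t+L_t>0$, and otherwise $a_t=-1$. Consequently $\ell_{t+1}=\ell_t+D_+(\ell_t)$ if $a_t=+1$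 and $\ell_{t+1}=\ell_t+D_-(\ell_t)$ if $a_t=-1$, where $D_+(x)=\log\frac{1-G_+(-x)}{1-G_-(-x)}$ and $D_-(x)=\log\frac{G_+(-x)}{G_-(-x)}$. We write $\mathbb{P}_+(\cdot)=\mathbb{P}(\cdot\mid\theta=+1)$ and $\mathbb{E}_+$ for the corresponding expectation. ''The left tail of $G_-$ is convex and differentiable'' means: there exists $x_0\in\mathbb{R}$ such that the restriction of $G_-$ to $(-\infty,x_0)$ is convex and differentiable. $E_t$ denotes the event that $a_\tau=+1$ for all $\tau\ge t$. *)

From Stdlib Require Import Reals List.
Open Scope R_scope.

Definition is_cdf (G : R -> R) : Prop :=
  (forall x y, x <= y -> G x <= G y) /\
  (forall x eps, 0 < eps -> exists d, 0 < d /\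
      forall y, x <= y < x + d -> Rabs (G y - G x) < eps) /\
  (forall eps, 0 < eps -> exists M, forall x, x <= - M -> G x < eps) /\
  (forall eps, 0 < eps -> exists M, forall x, M <= x -> 1 - eps < G x).

(* (Gp, Gm) are the conditional CDFs of a log-likelihood ratio L, i.e.
   dGp(l) = e^l dGm(l).  Stated measure-freely on half-open intervals (a,b]:
   the Gp-mass of (a,b] lies between e^a and e^b times its Gm-mass. *)
Definition llr_pair (Gp Gm : R -> R) : Prop :=
  is_cdf Gp /\ is_cdf Gm /\
  forall a b, a < b ->
    exp a * (Gm b - Gm a) <= Gp b - Gp a <= exp b * (Gm b - Gm a).

(* Unbounded signals: for every M, P(L > M) > 0 and P(L < -M) > 0, with
   P the unconditional law (prior 1/2 - 1/2). *)
Definition unbounded_signals (Gp Gm : R -> R) : Prop :=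
  forall M, 0 < (Gp M + Gm M) / 2 < 1.

Definition convex_on_lt (G : R -> R) (x0 : R) : Prop :=
  forall x y lam, x < x0 -> y < x0 -> 0 <= lam <= 1 ->
    G (lam * x + (1 - lam) * y) <= lam * G x + (1 - lam) * G y.

Definition left_tail_convex_diff (G : R -> R) : Prop :=
  exists x0, convex_on_lt G x0 /\
    forall x, x < x0 -> exists l, derivable_pt_lim G x l.

Definition Dplus (Gp Gm : R -> R) (x : R) : R :=
  ln ((1 - Gp (- x)) / (1 - Gm (- x))).
Definition Dminus (Gp Gm : R -> R) (x : R) : R :=
  ln (Gp (- x) / Gm (- x)).

(* action true = +1, false = -1 *)
Definition step (Gp Gm : R -> R) (x : R) (a : bool) : R :=
  if a then x + Dplus Gp Gm x else x + Dminus Gp Gm x.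

(* P_+(a_t = a | l_t = x): a_t = +1 iff l_t + L_t > 0, L_t ~ Gp under theta=+1,
   independent of the past. *)
Definition act_prob_plus (Gp : R -> R) (x : R) (a : bool) : R :=
  if a then 1 - Gp (- x) else Gp (- x).

(* Running a history of actions from public llr x: returns the final public
   llr and the P_+-probability of that history. *)
Fixpoint run (Gp Gm : R -> R) (x : R) (h : list bool) : R * R :=
  match h with
  | nil => (x, 1)
  | a :: h' =>
      let r := run Gp Gm (step Gp Gm x a) h' in
      (fst r, act_prob_plus Gp x a * snd r)
  end.

Fixpoint all_hist (n : nat) : list (list bool) :=
  match n with
  | O => nil :: nil
  | S k => map (cons true) (all_hist k) ++ map (cons false) (all_hist k)
  end.

Definition sumR (l : list R) : R := fold_right Rplus 0 l.

(* P_+(l_t = x): histories a_1..a_{t-1}, with l_1 = 0. *)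
Definition P_llr (Gp Gm : R -> R) (t : nat) (x : R) : R :=
  sumR (map (fun h =>
     if Req_EM_T (fst (run Gp Gm 0 h)) x then snd (run Gp Gm 0 h) else 0)
   (all_hist (t - 1))).

(* P_+(l_t = x and a_t = ... = a_{t+n-1} = +1). *)
Definition P_llr_plus_run (Gp Gm : R -> R) (t : nat) (x : R) (n : nat) : R :=
  sumR (map (fun h =>
     if Req_EM_T (fst (run Gp Gm 0 h)) x
     then snd (run Gp Gm 0 (h ++ repeat true n)) else 0)
   (all_hist (t - 1))).

From Stdlib Require Import Reals List Lra.
Open Scope R_scope.

(* The likelihood-ratio relation dGp = e^z dGm forces Gp <= Gm, and for z <= -L
   the gap satisfies Gm z - Gp z >= eta * Gm z.  Hence from a public belief
   x >= L an action +1 raises the belief by D(x) >= Gm(-x) - Gp(-x) >= eta Gm(-x),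
   while a -1 happens with probability Gp(-x) <= e^(-x) Gm(-x).  For a suitable
   K the potential K e^(-x) therefore drops at each +1 step by at least the
   hazard -ln(1 - Gp(-x)) of that step, so the probability that all future
   actions are +1 is at least exp(-K e^(-x)) >= exp(-K e^(-L)). *)

Lemma exp_le_compat x y : x <= y -> exp x <= exp y.
Proof.
  intros [lt | ->]; [left; apply exp_increasing; exact lt | apply Rle_refl].
Qed.

Lemma exp_sub_exp_ge a D :
  0 <= D -> exp (- (a + D)) * D <= exp (- a) - exp (- (a + D)).
Proof.
  intros D_ge0.
  assert (split_exp : exp (- a) = exp (- (a + D)) * exp D).
  { rewrite <- exp_plus; f_equal; ring. }
  pose proof (exp_ineq1_le D). pose proof (exp_pos (- (a + D))).
  rewrite split_exp; nra.
Qed.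

Lemma ln_ratio_ge p m :
  0 <= p <= m -> m < 1 -> m - p <= ln ((1 - p) / (1 - m)).
Proof.
  intros [p_ge0 p_le_m] m_lt1.
  (* ln y >= 1 - 1/y, and 1 - (1-m)/(1-p) = (m-p)/(1-p) >= m-p *)
  pose proof (exp_ineq1_le (- ln ((1 - p) / (1 - m)))) as H.
  rewrite exp_Ropp, exp_ln in H by (apply Rdiv_lt_0_compat; lra).
  replace (/ ((1 - p) / (1 - m))) with ((1 - m) / (1 - p)) in H by (field; lra).
  assert ((1 - m) / (1 - p) <= 1 - (m - p)).
  { apply (Rmult_le_reg_r (1 - p)); [lra|].
    unfold Rdiv; rewrite Rmult_assoc, Rinv_l by lra. nra. }
  lra.
Qed.

Lemma exp_neg_le_one_sub p q :
  0 <= p <= q -> q < 1 -> exp (- (p / (1 - q))) <= 1 - p.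
Proof.
  intros [p_ge0 p_le_q] q_lt1.
  set (c := / (1 - q)).
  assert (c_inv : c * (1 - q) = 1) by (unfold c; field; lra).
  assert (c_pos : 0 < c) by (unfold c; apply Rinv_0_lt_compat; lra).
  pose proof (exp_ineq1_le (c * p)) as e_ge.
  pose proof (exp_pos (c * p)).
  unfold Rdiv; rewrite Rmult_comm, exp_Ropp; fold c.
  apply (Rmult_le_reg_l (exp (c * p))); [assumption|].
  rewrite Rinv_r by lra.
  assert (1 <= (1 + c * p) * (1 - p)) by nra.
  nra.
Qed.

Lemma Un_cv_ge_lower_bound u l m : (forall n, m <= u n) -> Un_cv u l -> m <= l.
Proof.
  intros lb cv. destruct (Rle_lt_dec m l) as [h | h]; [exact h|].
  destruct (cv (m - l)) as [N HN]; [lra|].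
  specialize (HN N (le_n N)). specialize (lb N). unfold Rdist in HN.
  pose proof (Rle_abs (u N - l)). lra.
Qed.

Lemma cdf_ge0_of_sum_pos F G :
  is_cdf F -> is_cdf G -> (forall z, 0 < F z + G z) -> forall z, 0 <= F z.
Proof.
  intros [F_mono _] [_ [_ [G_low _]]] sum_pos z.
  destruct (Rle_lt_dec 0 (F z)) as [h | h]; [exact h|].
  destruct (G_low (- F z)) as [M HM]; [lra|].
  assert (F (Rmin z (- M)) <= F z) by (apply F_mono; apply Rmin_l).
  assert (G (Rmin z (- M)) < - F z) by (apply HM; apply Rmin_r).
  specialize (sum_pos (Rmin z (- M))); lra.
Qed.

Lemma cdf_le1_of_sum_lt2 F G :
  is_cdf F -> is_cdf G -> (forall z, F z + G z < 2) -> forall z, F z <= 1.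
Proof.
  intros [F_mono _] [_ [_ [_ G_high]]] sum_lt z.
  destruct (Rle_lt_dec (F z) 1) as [h | h]; [exact h|].
  destruct (G_high (F z - 1)) as [M HM]; [lra|].
  assert (F z <= F (Rmax z M)) by (apply F_mono; apply Rmax_l).
  assert (1 - (F z - 1) < G (Rmax z M)) by (apply HM; apply Rmax_r).
  specialize (sum_lt (Rmax z M)); lra.
Qed.

Section LlrPair.

Variables Gp Gm : R -> R.
Hypothesis pair : llr_pair Gp Gm.
Hypothesis unbounded : unbounded_signals Gp Gm.

Lemma Gp_range z : 0 <= Gp z <= 1.
Proof.
  destruct pair as [cp [cm _]].
  split; [apply (cdf_ge0_of_sum_pos Gp Gm) | apply (cdf_le1_of_sum_lt2 Gp Gm)];
    auto; intro w; specialize (unbounded w); lra.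
Qed.

Lemma Gm_range z : 0 <= Gm z <= 1.
Proof.
  destruct pair as [cp [cm _]].
  split; [apply (cdf_ge0_of_sum_pos Gm Gp) | apply (cdf_le1_of_sum_lt2 Gm Gp)];
    auto; intro w; specialize (unbounded w); lra.
Qed.

Lemma Gp_le_exp_mul_Gm z : Gp z <= exp z * Gm z.
Proof.
  destruct pair as [[_ [_ [Gp_low _]]] [_ mass]].
  destruct (Rle_lt_dec (Gp z) (exp z * Gm z)) as [h | h]; [exact h|].
  destruct (Gp_low (Gp z - exp z * Gm z)) as [M HM]; [lra|].
  set (a := Rmin (z - 1) (- M)).
  assert (a_lt : a < z) by (pose proof (Rmin_l (z - 1) (- M)); unfold a; lra).
  assert (Gp a < Gp z - exp z * Gm z) by (apply HM; apply Rmin_r).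
  destruct (mass a z a_lt) as [_ upper].
  pose proof (exp_pos z). pose proof (Gm_range a). pose proof (Gp_range a).
  nra.
Qed.

Lemma exp_mul_tail_le z : exp z * (1 - Gm z) <= 1 - Gp z.
Proof.
  destruct pair as [_ [[_ [_ [_ Gm_high]]] mass]].
  destruct (Rle_lt_dec (exp z * (1 - Gm z)) (1 - Gp z)) as [h | h]; [exact h|].
  pose proof (exp_pos z).
  set (d := exp z * (1 - Gm z) - (1 - Gp z)).
  destruct (Gm_high (d / exp z)) as [M HM].
  { unfold d; apply Rdiv_lt_0_compat; lra. }
  set (b := Rmax (z + 1) M).
  assert (z_lt : z < b) by (pose proof (Rmax_l (z + 1) M); unfold b; lra).
  assert (1 - d / exp z < Gm b) by (apply HM; apply Rmax_r).
  destruct (mass z b z_lt) as [lower _].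
  assert (exp z * (1 - d / exp z - Gm z) < exp z * (Gm b - Gm z))
    by (apply Rmult_lt_compat_l; lra).
  assert (exp z * (1 - d / exp z - Gm z) = 1 - Gp z) by (unfold d; field; lra).
  pose proof (Gp_range b). lra.
Qed.

Lemma Gm_pos z : 0 < Gm z.
Proof.
  pose proof (Gp_le_exp_mul_Gm z). pose proof (Gm_range z). pose proof (Gp_range z).
  specialize (unbounded z). pose proof (exp_pos z).
  destruct (Rle_lt_dec (Gm z) 0) as [h | h]; [|exact h].
  assert (Gm z = 0) by lra. nra.
Qed.

Lemma Gm_lt1 z : Gm z < 1.
Proof.
  destruct (Rle_lt_dec 1 (Gm z)) as [h | h]; [exfalso | exact h].
  pose proof (unbounded z). pose proof (Gm_range z).
  destruct pair as [[_ [_ [_ Gp_high]]] [_ mass]].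
  destruct (Gp_high (1 - Gp z)) as [M HM]; [lra|].
  set (b := Rmax (z + 1) M).
  assert (z_lt : z < b) by (pose proof (Rmax_l (z + 1) M); unfold b; lra).
  assert (1 - (1 - Gp z) < Gp b) by (apply HM; apply Rmax_r).
  destruct (mass z b z_lt) as [_ upper].
  pose proof (Gm_range b). pose proof (exp_pos b).
  assert (exp b * (Gm b - Gm z) <= 0) by nra.
  lra.
Qed.

Lemma Gp_lt1 z : Gp z < 1.
Proof.
  pose proof (exp_mul_tail_le z). pose proof (Gm_lt1 z). pose proof (exp_pos z).
  assert (0 < exp z * (1 - Gm z)) by (apply Rmult_lt_0_compat; lra). lra.
Qed.

Lemma Gm_sub_Gp_mono_nonpos a b : a <= b <= 0 -> Gm a - Gp a <= Gm b - Gp b.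
Proof.
  intros [[a_lt | ->] b_le0]; [|lra].
  destruct pair as [_ [[Gm_mono _] mass]].
  destruct (mass a b a_lt) as [_ upper].
  assert (exp b <= 1) by (rewrite <- exp_0; apply exp_le_compat; lra).
  assert (Gm a <= Gm b) by (apply Gm_mono; lra).
  pose proof (exp_pos b). nra.
Qed.

Lemma Gm_sub_Gp_anti_nonneg a b : 0 <= a <= b -> Gm b - Gp b <= Gm a - Gp a.
Proof.
  intros [a_ge0 [a_lt | ->]]; [|lra].
  destruct pair as [_ [[Gm_mono _] mass]].
  destruct (mass a b a_lt) as [lower _].
  assert (1 <= exp a) by (rewrite <- exp_0; apply exp_le_compat; lra).
  assert (Gm a <= Gm b) by (apply Gm_mono; lra).
  nra.
Qed.

(* On (-oo,-1] the likelihood-ratio bound Gp <= e^z Gm gives the gap; on [-1,0]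
   and [0,K] the gap is bounded below by its values at the endpoints -1 and K. *)
Lemma Gm_sub_Gp_ge_frac K :
  exists eta, 0 < eta /\ forall z, z <= K -> eta * Gm z <= Gm z - Gp z.
Proof.
  set (M := Rmax K 1).
  assert (K_le : K <= M) by apply Rmax_l.
  assert (one_le : 1 <= M) by apply Rmax_r.
  assert (e_lt1 : exp (-1) < 1) by (rewrite <- exp_0; apply exp_increasing; lra).
  assert (e_gt1 : 1 < exp M) by (rewrite <- exp_0; apply exp_increasing; lra).
  pose proof (Gm_pos (-1)). pose proof (Gm_lt1 M).
  set (d := Rmin ((1 - exp (-1)) * Gm (-1)) ((exp M - 1) * (1 - Gm M))).
  assert (d_pos : 0 < d).
  { unfold d; apply Rmin_glb_lt; apply Rmult_lt_0_compat; lra. }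
  exists (Rmin (1 - exp (-1)) d). split; [apply Rmin_glb_lt; lra|].
  intros z z_le.
  pose proof (Rmin_l (1 - exp (-1)) d). pose proof (Rmin_r (1 - exp (-1)) d).
  set (eta := Rmin (1 - exp (-1)) d) in *.
  assert (eta_pos : 0 < eta) by (unfold eta; apply Rmin_glb_lt; lra).
  pose proof (Gm_range z).
  assert (eta * Gm z <= eta) by nra.
  destruct (Rle_lt_dec z (-1)) as [z_le1 | z_gt1].
  - pose proof (Gp_le_exp_mul_Gm z).
    assert (exp z <= exp (-1)) by (apply exp_le_compat; lra).
    nra.
  - destruct (Rle_lt_dec z 0) as [z_le0 | z_pos].
    + pose proof (Gm_sub_Gp_mono_nonpos (-1) z (conj (Rlt_le _ _ z_gt1) z_le0)).
      pose proof (Gp_le_exp_mul_Gm (-1)).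
      assert (d <= (1 - exp (-1)) * Gm (-1)) by apply Rmin_l.
      lra.
    + assert (z_le_M : z <= M) by lra.
      pose proof (Gm_sub_Gp_anti_nonneg z M (conj (Rlt_le _ _ z_pos) z_le_M)).
      pose proof (exp_mul_tail_le M).
      assert (d <= (exp M - 1) * (1 - Gm M)) by apply Rmin_r.
      lra.
Qed.

Lemma exp_Dplus x : exp (Dplus Gp Gm x) = (1 - Gp (- x)) / (1 - Gm (- x)).
Proof.
  apply exp_ln. pose proof (Gp_lt1 (- x)). pose proof (Gm_lt1 (- x)).
  apply Rdiv_lt_0_compat; lra.
Qed.

Definition prob_all_plus x n := snd (run Gp Gm x (repeat true n)).

Lemma prob_all_plus_succ x n :
  prob_all_plus x (S n) = (1 - Gp (- x)) * prob_all_plus (x + Dplus Gp Gm x) n.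
Proof. reflexivity. Qed.

Lemma prob_all_plus_nonneg_decr n x :
  0 <= prob_all_plus x n /\ prob_all_plus x (S n) <= prob_all_plus x n.
Proof.
  revert x; induction n as [|n IH]; intro x;
    rewrite prob_all_plus_succ; pose proof (Gp_range (- x)).
  - unfold prob_all_plus; simpl; lra.
  - rewrite prob_all_plus_succ.
    destruct (IH (x + Dplus Gp Gm x)) as [nonneg decr].
    split; [apply Rmult_le_pos | apply Rmult_le_compat_l]; lra.
Qed.

Lemma prob_all_plus_cv x : {l | Un_cv (prob_all_plus x) l}.
Proof.
  apply decreasing_cv.
  - intro n. apply prob_all_plus_nonneg_decr.
  - exists 0. intros y [n ->]. unfold opp_seq.
    pose proof (proj1 (prob_all_plus_nonneg_decr n x)). lra.
Qed.

Section Potential.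

Variables L eta : R.
Hypothesis eta_pos : 0 < eta.
Hypothesis gap_ge : forall z, z <= - L -> eta * Gm z <= Gm z - Gp z.

Definition potential_coef := / (eta * (1 - Gp (- L)) * (1 - Gm (- L))).

Lemma potential_coef_pos : 0 < potential_coef.
Proof.
  pose proof (Gp_lt1 (- L)). pose proof (Gm_lt1 (- L)).
  apply Rinv_0_lt_compat. repeat apply Rmult_lt_0_compat; lra.
Qed.

Lemma Dplus_ge_gap x : L <= x -> Gm (- x) - Gp (- x) <= Dplus Gp Gm x.
Proof.
  intros L_le. pose proof (gap_ge (- x) ltac:(lra)).
  pose proof (Gm_pos (- x)). pose proof (Gp_range (- x)).
  apply ln_ratio_ge; [nra | apply Gm_lt1].
Qed.

Lemma Dplus_nonneg x : L <= x -> 0 <= Dplus Gp Gm x.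
Proof.
  intros L_le. pose proof (Dplus_ge_gap x L_le). pose proof (gap_ge (- x) ltac:(lra)).
  pose proof (Gm_pos (- x)). nra.
Qed.

Lemma exp_Dplus_le x : L <= x -> exp (Dplus Gp Gm x) * (1 - Gm (- L)) <= 1.
Proof.
  intros L_le. rewrite exp_Dplus.
  destruct pair as [_ [[Gm_mono _] _]].
  assert (Gm (- x) <= Gm (- L)) by (apply Gm_mono; lra).
  pose proof (Gp_range (- x)). pose proof (Gm_lt1 (- L)).
  apply (Rmult_le_reg_r (1 - Gm (- x))); [pose proof (Gm_lt1 (- x)); lra|].
  unfold Rdiv. replace ((1 - Gp (- x)) * / (1 - Gm (- x)) * (1 - Gm (- L))
    * (1 - Gm (- x))) with ((1 - Gp (- x)) * (1 - Gm (- L)))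
    by (field; pose proof (Gm_lt1 (- x)); lra).
  nra.
Qed.

Lemma potential_drop x : L <= x ->
  Gp (- x) / (1 - Gp (- L)) + potential_coef * exp (- (x + Dplus Gp Gm x))
    <= potential_coef * exp (- x).
Proof.
  intros L_le.
  pose proof (Dplus_ge_gap x L_le) as D_ge.
  pose proof (gap_ge (- x) ltac:(lra)) as gap.
  pose proof (Gp_le_exp_mul_Gm (- x)) as p_le.
  pose proof (exp_Dplus_le x L_le) as eD_le.
  pose proof (Dplus_nonneg x L_le) as D_ge0.
  pose proof (exp_pos (- x)).
  pose proof (Gp_lt1 (- L)). pose proof (Gm_lt1 (- L)).
  set (D := Dplus Gp Gm x) in *. set (p := Gp (- x)) in *.
  set (m := Gm (- x)) in *.
  set (a := 1 - Gp (- L)). set (b := 1 - Gm (- L)) in *.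
  pose proof (exp_sub_exp_ge x D D_ge0) as drop.
  set (y := exp (- (x + D))) in *.
  assert (b_y : b * exp (- x) <= y).
  { replace (exp (- x)) with (y * exp D)
      by (unfold y; rewrite <- exp_plus; f_equal; ring).
    pose proof (exp_pos (- (x + D))) as y_pos. fold y in y_pos. nra. }
  assert (a_pos : 0 < a) by (unfold a; lra).
  assert (b_pos : 0 < b) by (unfold b; lra).
  assert (eta_p : eta * p <= exp (- x) * (m - p)).
  { apply Rle_trans with (eta * (exp (- x) * m)); [apply Rmult_le_compat_l; lra|].
    nra. }
  assert (chain : eta * b * p <= exp (- x) - y).
  { replace (eta * b * p) with (b * (eta * p)) by ring.
    apply Rle_trans with (b * (exp (- x) * D)).
    - apply Rmult_le_compat_l; [lra|].
      apply Rle_trans with (exp (- x) * (m - p)); [exact eta_p|].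
      apply Rmult_le_compat_l; lra.
    - apply Rle_trans with (y * D); [|exact drop].
      rewrite <- Rmult_assoc. apply Rmult_le_compat_r; lra. }
  unfold potential_coef; fold a b.
  apply (Rmult_le_reg_l (eta * a * b)); [repeat apply Rmult_lt_0_compat; lra|].
  replace (eta * a * b * (p / a + / (eta * a * b) * y)) with (eta * b * p + y)
    by (field; repeat split; lra).
  replace (eta * a * b * (/ (eta * a * b) * exp (- x))) with (exp (- x))
    by (field; repeat split; lra).
  lra.
Qed.

Lemma prob_all_plus_ge n x :
  L <= x -> exp (- (potential_coef * exp (- x))) <= prob_all_plus x n.
Proof.
  revert x; induction n as [|n IH]; intros x L_le.
  - unfold prob_all_plus; simpl. rewrite <- exp_0. apply exp_le_compat.
    pose proof potential_coef_pos. pose proof (exp_pos (- x)). nra.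
  - rewrite prob_all_plus_succ.
    pose proof (potential_drop x L_le) as drop.
    pose proof (Dplus_nonneg x L_le). pose proof (Gp_range (- x)).
    assert (p_le : Gp (- x) <= Gp (- L)).
    { destruct pair as [[Gp_mono _] _]. apply Gp_mono; lra. }
    pose proof (exp_neg_le_one_sub (Gp (- x)) (Gp (- L))
      ltac:(lra) (Gp_lt1 (- L))) as first_step.
    specialize (IH (x + Dplus Gp Gm x) ltac:(lra)).
    apply Rle_trans with (exp (- (Gp (- x) / (1 - Gp (- L))))
      * exp (- (potential_coef * exp (- (x + Dplus Gp Gm x))))).
    + rewrite <- exp_plus. apply exp_le_compat. lra.
    + apply Rmult_le_compat; try (left; apply exp_pos); lra.
Qed.

End Potential.

End LlrPair.

Lemma run_app_snd Gp Gm h h' z :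
  snd (run Gp Gm z (h ++ h')) =
  snd (run Gp Gm z h) * snd (run Gp Gm (fst (run Gp Gm z h)) h').
Proof.
  revert z; induction h as [|a h IH]; intro z; simpl; [ring|].
  rewrite IH. ring.
Qed.

Lemma sumR_map_mulr (A : Type) (f : A -> R) q l :
  sumR (map (fun h => f h * q) l) = sumR (map f l) * q.
Proof. induction l as [|a l IH]; simpl; [ring|]. rewrite IH. ring. Qed.

Lemma P_llr_plus_run_eq Gp Gm t x n :
  P_llr_plus_run Gp Gm t x n = P_llr Gp Gm t x * prob_all_plus Gp Gm x n.
Proof.
  unfold P_llr_plus_run, P_llr. rewrite <- sumR_map_mulr. f_equal.
  apply map_ext. intro h.
  destruct (Req_EM_T (fst (run Gp Gm 0 h)) x) as [e | e]; [|ring].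
  rewrite run_app_snd, e. reflexivity.
Qed.

Theorem lemma6 (Gp Gm : R -> R) :
  llr_pair Gp Gm ->
  unbounded_signals Gp Gm ->
  continuity Gp -> continuity Gm ->
  left_tail_convex_diff Gm ->
  forall L : R, exists mL : R, 0 < mL /\
    forall (t : nat) (x : R), (1 <= t)%nat -> L <= x ->
      0 < P_llr Gp Gm t x ->
      exists pE : R,
        Un_cv (fun n => P_llr_plus_run Gp Gm t x n / P_llr Gp Gm t x) pE /\
        mL <= pE.
Proof.
  intros pair unbounded _ _ _ L.
  destruct (Gm_sub_Gp_ge_frac Gp Gm pair unbounded (- L)) as [eta [eta_pos gap]].
  set (K := potential_coef Gp Gm L eta).
  exists (exp (- (K * exp (- L)))). split; [apply exp_pos|].
  intros t x _ L_le P_pos.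
  destruct (prob_all_plus_cv Gp Gm pair unbounded x) as [pE cv].
  exists pE. split.
  - apply (Un_cv_ext (prob_all_plus Gp Gm x)); [|exact cv].
    intro n. rewrite P_llr_plus_run_eq. field. lra.
  - apply (Un_cv_ge_lower_bound (prob_all_plus Gp Gm x)); [intro n | exact cv].
    apply Rle_trans with (exp (- (K * exp (- x)))).
    + apply exp_le_compat.
      assert (exp (- x) <= exp (- L)) by (apply exp_le_compat; lra).
      pose proof (potential_coef_pos Gp Gm pair unbounded L eta eta_pos) as K_pos.
      fold K in K_pos. nra.
    + exact (prob_all_plus_ge Gp Gm pair unbounded L eta eta_pos gap n x L_le).
Qed.
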